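(* Let $\Omega$ be a countably infinite set and $G$ a subgroup of $S=\mathrm{Sym}(\Omega)$. Suppose there exist two sequences $(\alpha_i)_{i\in\omega},(\beta_i)_{i\in\omega}$ of elements of $\Omega$, all of the elements $\alpha_i,\beta_i$ being distinct, such that for every $(\gamma_i)\in\prod_{i\in\omega}\{\alpha_i,\beta_i\}$ there exists $g\in G$ with $\gamma_i=\alpha_ig$ for all $i$. Then $S_{(A_0)}\preccurlyeq G$, where $A_0$ is a partition of $\Omega$ having infinitely many $1$-element members, infinitely many $2$-element members, and no other members.
   Context: $\mathrm{Sym}(\Omega)$ is the group of all permutations of $\Omega$, acting on the right. For a partition $A$ of $\Omega$, $S_{(A)}=\{f\in S:\Sigma f=\Sigma\ \forall\Sigma\in A\}$ (such $A_0$ is unique up to a permutation of $\Omega$, so $S_{(A_0)}$ is determined up to conjugacy). For subgroups $G_1,G_2\le S$, $G_1\preccurlyeq G_2$ means there is a finite $U\subseteq S$ with $G_1\le\langle G_2\cup U\rangle$. *)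

From mathcomp Require Import all_boot.
From mathcomp Require Import boolp classical_sets functions cardinality.
Set Implicit Arguments. Unset Strict Implicit. Unset Printing Implicit Defensive.
Local Open Scope classical_set_scope.

(* Permutations of Omega are bijective functions Omega -> Omega; a permutation
   g acts on the right, alpha g := g alpha. *)
Definition Sym (Omega : Type) : set (Omega -> Omega) := [set f | bijective f].
Arguments Sym Omega : clear implicits.

Definition is_subgroup (Omega : Type) (G : set (Omega -> Omega)) : Prop :=
  G `<=` Sym Omega /\ G id /\
  (forall f g, G f -> G g -> G (g \o f)) /\
  (forall f, G f -> exists2 h, G h & cancel f h /\ cancel h f).

Definition gen (Omega : Type) (X : set (Omega -> Omega)) : set (Omega -> Omega) :=
  [set f | forall H, is_subgroup H -> X `<=` H -> H f].

Definition preceq (Omega : Type) (G1 G2 : set (Omega -> Omega)) : Prop :=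
  exists U : set (Omega -> Omega),
    finite_set U /\ U `<=` Sym Omega /\ G1 `<=` gen (G2 `|` U).

Definition is_partition (Omega : Type) (A : set (set Omega)) : Prop :=
  (forall B, A B -> B !=set0) /\
  (forall B C, A B -> A C -> B `&` C !=set0 -> B = C) /\
  (forall x, exists B, A B /\ B x).

Definition part_stab (Omega : Type) (A : set (set Omega)) : set (Omega -> Omega) :=
  [set f | Sym Omega f /\ forall B, A B -> f @` B = B].

Definition singleton_block (Omega : Type) (B : set Omega) : Prop :=
  exists x, B = [set x].
Definition pair_block (Omega : Type) (B : set Omega) : Prop :=
  exists x y, x <> y /\ B = [set x; y].

Definition is_A0 (Omega : Type) (A : set (set Omega)) : Prop :=
  is_partition A /\
  infinite_set [set B | A B /\ singleton_block B] /\
  infinite_set [set B | A B /\ pair_block B] /\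
  (forall B, A B -> singleton_block B \/ pair_block B).

(* If g in G sends each alpha_i to gamma_i in {alpha_i, beta_i}, then conjugating
   by g turns a permutation x_s : alpha_i |-> alpha_(s i) of the alphas into the
   same permutation of the gammas.  For an involution s, a product of four such
   conjugates of x_s (for four choices of gamma) is the product of the
   transpositions (alpha_i beta_i) over any s-invariant set of indices moved by s.
   With s pairing 2m with 2m+1, and s' pairing 2m+1 with 2m+2, prefix sums mod 2
   then yield every product of transpositions (alpha_2k beta_2k), k in Y.  An
   element of S_(A0) is a product of transpositions of pair blocks, so a bijection
   u of Omega carrying the k-th pair block onto {alpha_2k, beta_2k} and the
   singleton blocks onto the remaining points conjugates S_(A0) into
   <G, x_s, x_s'>; hence U = {u, u^-1, x_s, x_s'} works. *)

From mathcomp Require Import all_boot zify.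
From mathcomp Require Import boolp classical_sets functions cardinality.
Set Implicit Arguments. Unset Strict Implicit. Unset Printing Implicit Defensive.
Local Open Scope classical_set_scope.

Lemma subgroup_comp (Omega : Type) (H : set (Omega -> Omega)) f g :
  is_subgroup H -> H f -> H g -> H (g \o f).
Proof. by case=> _ [_ [HM _]]; apply: HM. Qed.

Lemma countable_infinite_enum (T : Type) (A : set T) :
  countable A -> infinite_set A ->
  exists en : nat -> T,
    [/\ injective en, forall n, A (en n) & forall x, A x -> exists n, en n = x].
Proof.
move=> cA iA; have /card_bijP [f [g fg gf]] : ([set: nat] #= A)%card.
  by rewrite card_eq_sym; apply: eq_card_nat.
have natT n : n \in [set: nat] by apply: mem_set.
exists (fun n => val (f (SigSub (natT n)))); split.
- by move=> m n /val_inj /(can_inj fg) /(congr1 val).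
- by move=> n; case: (f _) => x /= /set_mem.
- move=> x Ax; pose a : A := SigSub (mem_set Ax); exists (val (g a)).
  have -> : SigSub (natT (val (g a))) = g a by apply: val_inj.
  by rewrite gf.
Qed.

Lemma sum_case_bij (A B T : Type) (f : A -> T) (g : B -> T) :
  injective f -> injective g -> (forall a b, f a <> g b) ->
  (forall z, (exists a, f a = z) \/ (exists b, g b = z)) ->
  bijective (fun c => match c with inl a => f a | inr b => g b end).
Proof.
move=> f_inj g_inj fg cover.
set enc := fun c => _.
have enc_inj : injective enc.
  move=> [a|b] [a'|b'] /= e; first by rewrite (f_inj _ _ e).
  - by case: (fg _ _ e).
  - by case: (fg _ _ (esym e)).
  - by rewrite (g_inj _ _ e).
have enc_onto z : exists c, enc c = z.
  by case: (cover z) => [[a fa]|[b gb]]; [exists (inl a)|exists (inr b)].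
have [dec decK] := choice enc_onto.
by exists dec => [c|z] //; apply: enc_inj; rewrite decK.
Qed.

Lemma countable_bij_nat (T : Type) (e : nat -> T) (A : set T) :
  bijective e -> countable A.
Proof.
case=> e' _ e'e; apply/countable_injP; exists e' => x y _ _ exy.
by rewrite -(e'e x) exy e'e.
Qed.

Lemma complement_enum (B T : Type) (q : B -> T) :
  injective q -> countable (~` range q) -> infinite_set (~` range q) ->
  exists enc : nat + B -> T, bijective enc /\ forall x, enc (inr x) = q x.
Proof.
move=> q_inj cnt inf.
have [en [en_inj en_out en_onto]] := countable_infinite_enum cnt inf.
exists (fun c => match c with inl n => en n | inr x => q x end); split => //.
apply: sum_case_bij => // [n x enq|z].
  by apply: (en_out n); exists x.
have [/= [x _ <-]|out] := pselect (range q z); first by right; exists x.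
by left; apply: en_onto.
Qed.

Lemma partition_block_eq (T : Type) (A : set (set T)) B C z :
  is_partition A -> A B -> A C -> B z -> C z -> B = C.
Proof. by case=> _ [disj _] AB AC Bz Cz; apply: disj => //; exists z. Qed.

Lemma countable_partition (T : Type) (A : set (set T)) :
  is_partition A -> countable [set: T] -> countable A.
Proof.
move=> Apart /countable_injP [f f_inj].
pose rep (B : set T) :=
  if pselect (B !=set0) is left h then f (projT1 (cid h)) else 0.
apply/countable_injP; exists rep => B C /set_mem AB /set_mem AC.
rewrite /rep; case: pselect => [hB|]; last by case; exact: Apart.1 _ AB.
case: pselect => [hC|]; last by case; exact: Apart.1 _ AC.
case: (cid hB) => x Bx; case: (cid hC) => y Cy /= /f_inj xy.
by apply: (partition_block_eq Apart AB AC Bx); rewrite xy ?inE.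
Qed.

Lemma image_set1_fixed (T : Type) (f : T -> T) z : f @` [set z] = [set z] -> f z = z.
Proof. by move=> fz; have : [set z] (f z) by rewrite -fz; exists z. Qed.

Lemma image_set2_perm (T : Type) (f : T -> T) x y :
  x <> y -> injective f -> f @` [set x; y] = [set x; y] ->
  exists b : bool, f x = (if b then y else x) /\ f y = (if b then x else y).
Proof.
move=> xy f_inj fxy.
have inxy z : [set x; y] z -> [set x; y] (f z) by move=> xyz; rewrite -fxy; exists z.
have [fx fy] := (inxy x (or_introl erefl), inxy y (or_intror erefl)).
case: fx => fx; case: fy => fy.
- by case: xy; apply: f_inj; rewrite fx fy.
- by exists false.
- by exists true.
- by case: xy; apply: f_inj; rewrite fx fy.
Qed.

Section Enumeration.
Variables (Omega : Type) (A0 : set (set Omega)).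
Hypotheses (A0P : is_A0 A0) (Omega_cnt : countable [set: Omega]).

Lemma pair_blocks_enum : exists pr : bool * nat -> Omega,
  [/\ injective pr, forall k, A0 [set pr (false, k); pr (true, k)] &
      forall B, A0 B -> pair_block B -> exists k, B = [set pr (false, k); pr (true, k)]].
Proof.
have [Apart [_ [pairs_inf _]]] := A0P.
have pairs_cnt : countable [set B | A0 B /\ pair_block B].
  apply: sub_countable (countable_partition Apart Omega_cnt).
  by apply: subset_card_le => B [].
have [pe [pe_inj peP pe_onto]] := countable_infinite_enum pairs_cnt pairs_inf.
have orient k : exists xy : Omega * Omega, xy.1 <> xy.2 /\ pe k = [set xy.1; xy.2].
  by have [_ [x [y [xy ->]]]] := peP k; exists (x, y).
have [o oE] := choice orient.
pose pr (x : bool * nat) := let: (b, k) := x in if b then (o k).2 else (o k).1.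
have prE k : pe k = [set pr (false, k); pr (true, k)] by exact: (oE k).2.
have pr_in b k : pe k (pr (b, k)) by rewrite prE; case: b; [right|left].
exists pr; split.
- move=> [b k] [b' k'] e.
  have kk : k = k'.
    apply/pe_inj/(partition_block_eq Apart (peP k).1 (peP k').1 (pr_in b k)).
    by rewrite e.
  subst k'; case: b b' e => [] [] //= e; by move: (oE k).1; rewrite e => /(_ erefl).
- by move=> k; rewrite -prE; exact: (peP k).1.
- by move=> B AB pB; have [k <-] := pe_onto B (conj AB pB); exists k.
Qed.

Lemma infinite_singletons : infinite_set [set z | A0 [set z]].
Proof.
have [_ [sing_inf _]] := A0P.
move=> fin; apply: sing_inf; apply: sub_finite_set (finite_image (fun z => [set z]) fin).
by move=> B [AB [z Bz]]; exists z => //; rewrite /= -Bz.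
Qed.

Lemma is_A0_enum : exists enc : nat + bool * nat -> Omega,
  [/\ bijective enc, forall n, A0 [set enc (inl n)] &
      forall k, A0 [set enc (inr (false, k)); enc (inr (true, k))]].
Proof.
have [Apart [_ [_ kinds]]] := A0P.
have sing_cnt : countable [set z | A0 [set z]].
  exact: sub_countable (subset_card_le (@subsetT _ _)) Omega_cnt.
have [sq [sq_inj sqS sq_onto]] := countable_infinite_enum sing_cnt infinite_singletons.
have [pr [pr_inj prA pr_onto]] := pair_blocks_enum.
exists (fun c => match c with inl n => sq n | inr x => pr x end); split => //.
apply: sum_case_bij => // [n [b k] e|z].
  have blk : [set sq n] = [set pr (false, k); pr (true, k)].
    apply: (partition_block_eq Apart (sqS n) (prA k) (erefl (sq n))).
    by rewrite e; case: b e; [right|left].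
  have e0 : [set sq n] (pr (false, k)) by rewrite blk; left.
  have e1 : [set sq n] (pr (true, k)) by rewrite blk; right.
  by move: (pr_inj _ _ (etrans e0 (esym e1))).
have [B [AB Bz]] := Apart.2.2 z.
case: (kinds B AB) => [[w Bw]|pB].
  by left; apply: sq_onto; move: AB Bz; rewrite Bw => AB ->.
have [k Bk] := pr_onto B AB pB; right.
by move: Bz; rewrite Bk => -[->|->]; eexists.
Qed.

End Enumeration.

Section Extension.
Variables (T Omega : Type) (p : T -> Omega).
Hypothesis p_inj : injective p.

Definition extend (sigma : T -> T) (w : Omega) : Omega :=
  if pselect (exists t, w = p t) is left h then p (sigma (projT1 (cid h))) else w.

Lemma extend_in sigma t : extend sigma (p t) = p (sigma t).
Proof.
rewrite /extend; case: pselect => [h|[]]; last by exists t.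
by case: (cid h) => t' /= /p_inj <-.
Qed.

Lemma extend_out sigma w : ~ (exists t, w = p t) -> extend sigma w = w.
Proof. by rewrite /extend; case: pselect. Qed.

Lemma extend_can sigma tau : cancel sigma tau -> cancel (extend sigma) (extend tau).
Proof.
move=> st w; have [[t ->]|out] := pselect (exists t, w = p t).
  by rewrite !extend_in st.
by rewrite !extend_out.
Qed.

Lemma extend_bij sigma : bijective sigma -> bijective (extend sigma).
Proof. by case=> tau st ts; exists (extend tau); apply: extend_can. Qed.

Lemma extend_comp sigma tau : extend sigma \o extend tau = extend (sigma \o tau).
Proof.
apply: funext => w /=; have [[t ->]|out] := pselect (exists t, w = p t).
  by rewrite !extend_in.
by rewrite !extend_out.
Qed.

End Extension.

Definition flip (e : nat -> bool) (x : bool * nat) : bool * nat :=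
  let: (b, i) := x in (b (+) e i, i).

Definition shift_alpha (s : nat -> nat) (x : bool * nat) : bool * nat :=
  let: (b, i) := x in if b then x else (false, s i).

Definition conj_shift (c : nat -> bool) (s : nat -> nat) (x : bool * nat) :=
  let: (b, i) := x in if b == c i then (c (s i), s i) else x.

Lemma flip_comp e1 e2 : flip e1 \o flip e2 = flip (fun i => e1 i (+) e2 i).
Proof. by apply: funext => -[b i] /=; rewrite -addbA (addbC (e2 i)). Qed.

Lemma shift_alpha_inv s : involutive s -> involutive (shift_alpha s).
Proof. by move=> sK [[] i] //=; rewrite sK. Qed.

(* On a pair {i, j} with e i and i < j = s i, the four factors act as the
   transpositions (a_i a_j), (b_i b_j), (b_i a_j), (a_i b_j), where a = (false, _)
   and b = (true, _); their product is (a_i b_i)(a_j b_j). *)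
Lemma flip_conj_shifts (s : nat -> nat) (e : nat -> bool) :
  involutive s -> (forall i, e (s i) = e i) -> (forall i, e i -> s i != i) ->
  flip e = conj_shift (fun=> false) s \o conj_shift e s
           \o conj_shift (fun i => e i && (i < s i)) s
           \o conj_shift (fun i => e i && (s i < i)) s.
Proof.
move=> sK es e_move; apply: funext => -[b i] /=.
case ei: (e i); last by case: b; do 4 rewrite /= ?sK ?es ?ei.
have [lt|gt|eq] := ltngtP i (s i); last by move: (e_move i ei); rewrite -eq eqxx.
- have nlt : (s i < i) = false by rewrite ltnNge ltnW.
  by case: b; do 4 rewrite /= ?sK ?es ?ei ?lt ?nlt.
- have nlt : (i < s i) = false by rewrite ltnNge ltnW.
  by case: b; do 4 rewrite /= ?sK ?es ?ei ?gt ?nlt.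
Qed.

Fixpoint prefix_xor (Y : nat -> bool) (m : nat) : bool :=
  if m is m'.+1 then prefix_xor Y m' (+) Y m else Y 0.

Definition pairing0 (j : nat) : nat := if odd j then j.-1 else j.+1.

Definition pairing1 (j : nat) : nat := if j is j'.+1 then (pairing0 j').+1 else 0.

Lemma pairing0_inv : involutive pairing0.
Proof.
by move=> j; rewrite /pairing0; case: (boolP (odd j)) => oj /=; case: ifP; lia.
Qed.

Lemma pairing1_inv : involutive pairing1.
Proof. by case=> // j; rewrite /= pairing0_inv. Qed.

Lemma half_pairing0 j : (pairing0 j)./2 = j./2.
Proof. by rewrite /pairing0; case: ifP; lia. Qed.

Lemma pairing0_neq j : pairing0 j != j.
Proof. by rewrite /pairing0; case: ifP; lia. Qed.

Definition even_flip (Y : nat -> bool) : bool * nat -> bool * nat :=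
  flip (fun j => ~~ odd j && Y j./2).

(* The first factor is pairing0-invariant, the second pairing1-invariant, and
   their sum telescopes to Y on even indices and vanishes on odd ones. *)
Lemma even_flip_as_comp Y :
  even_flip Y = flip (fun j => prefix_xor Y j./2)
                \o flip (fun j => if j is j'.+1 then prefix_xor Y j'./2 else false).
Proof.
rewrite flip_comp /even_flip; congr flip; apply: funext => -[|j] /=.
  by rewrite addbF.
have [m [->|->]] : exists m, j = m.*2 \/ j = m.*2.+1.
  by exists j./2; case: (boolP (odd j)) => oj; [right|left]; lia.
- by rewrite uphalf_double doubleK odd_double /= addbb.
- by rewrite /= doubleK odd_double uphalf_double /= addbC addbA addbb.
Qed.

Definition flip_sum (Y : nat -> bool) (c : nat + bool * nat) : nat + bool * nat :=
  if c is inr x then inr (flip Y x) else c.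

Lemma part_stab_flip_sum (Omega : Type) (A0 : set (set Omega))
    (enc : nat + bool * nat -> Omega) f :
  injective enc -> (forall n, A0 [set enc (inl n)]) ->
  (forall k, A0 [set enc (inr (false, k)); enc (inr (true, k))]) ->
  part_stab A0 f -> exists Y, f \o enc = enc \o flip_sum Y.
Proof.
move=> enc_inj sing pair [[f' ff' _] fA].
have pair_perm k : exists y, f (enc (inr (false, k))) = enc (inr (y, k)) /\
                             f (enc (inr (true, k))) = enc (inr (~~ y, k)).
  have [|b [fa fb]] := image_set2_perm _ (can_inj ff') (fA _ (pair k)).
    by move/enc_inj.
  by exists b; case: b fa fb.
have [Y fY] := choice pair_perm.
exists Y; apply: funext => -[n|[[] k]] /=.
- exact/image_set1_fixed/fA.
- by rewrite (fY k).2; case: (Y k).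
- by rewrite (fY k).1; case: (Y k).
Qed.

Section Swaps.
Variables (Omega : Type) (alpha beta : nat -> Omega).
Hypotheses (alpha_inj : injective alpha) (beta_inj : injective beta)
  (alpha_beta : forall i j, alpha i <> beta j).

Definition pt (x : bool * nat) : Omega :=
  let: (b, i) := x in if b then beta i else alpha i.

Lemma pt_inj : injective pt.
Proof.
move=> [[] i] [[] j] /= h; first by move/beta_inj: h => ->.
- by case: (alpha_beta (esym h)).
- by case: (alpha_beta h).
- by move/alpha_inj: h => ->.
Qed.

Lemma extend_shift_alpha_out s w :
  (forall j, w <> alpha j) -> extend pt (shift_alpha s) w = w.
Proof.
move=> w_alpha; have [[[[] i] wE]|out] := pselect (exists x, w = pt x).
- by rewrite wE (extend_in pt_inj).
- by case: (w_alpha i wE).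
- by rewrite extend_out.
Qed.

Lemma conj_extend_shift (g h : Omega -> Omega) c s :
  cancel g h -> cancel h g -> (forall i, g (alpha i) = pt (c i, i)) ->
  g \o extend pt (shift_alpha s) \o h = extend pt (conj_shift c s).
Proof.
move=> gh hg gE; apply: funext => w /=.
have [[i ->]|not_g] := pselect (exists i, w = g (alpha i)).
  rewrite gh gE (extend_in pt_inj _ (c i, i)) /= eqxx.
  by rewrite -[alpha i]/(pt (false, i)) (extend_in pt_inj) gE.
have h_alpha j : h w <> alpha j by move=> hj; apply: not_g; exists j; rewrite -hj hg.
rewrite extend_shift_alpha_out // hg.
have [[[b i] wE]|out] := pselect (exists x, w = pt x); last by rewrite extend_out.
rewrite wE (extend_in pt_inj) /=; case: eqP => // bc.
by case: not_g; exists i; rewrite wE gE bc.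
Qed.

Definition even_pt (x : bool * nat) : Omega := let: (b, k) := x in pt (b, k.*2).

Lemma even_pt_inj : injective even_pt.
Proof. by move=> [b k] [b' k'] /pt_inj [-> /double_inj ->]. Qed.

Lemma infinite_not_even_pt : infinite_set (~` range even_pt).
Proof.
apply: (@sub_infinite_set _ (range (fun n => alpha n.*2.+1))).
  move=> _ [n _ <-] [[b k] _] /=; case: b => [/esym/alpha_beta//|/alpha_inj]; lia.
rewrite (eq_finite_set (inj_card_eq _)); first exact: infinite_nat.
by move=> m n _ _ /alpha_inj; lia.
Qed.

Lemma extend_even_flip_enc (enc : nat + bool * nat -> Omega) Y :
  injective enc -> (forall x, enc (inr x) = even_pt x) ->
  extend pt (even_flip Y) \o enc = enc \o flip_sum Y.
Proof.
move=> enc_inj encE; apply: funext => -[n|[b k]] /=; last first.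
  by rewrite !encE (extend_in pt_inj) /= odd_double doubleK.
have [[[b j] wE]|out] := pselect (exists x, enc (inl n) = pt x);
  last by rewrite extend_out.
rewrite wE (extend_in pt_inj) /=; case: (boolP (odd j)) => oj; first by rewrite addbF.
have /enc_inj // : enc (inl n) = enc (inr (b, j./2)).
by rewrite wE encE /=; congr (pt (_, _)); lia.
Qed.

Section Generation.
Variable H : set (Omega -> Omega).
Hypotheses (H_sub : is_subgroup H)
  (H_rich : forall c, exists2 g, H g & forall i, g (alpha i) = pt (c i, i)).

Lemma conj_shift_in c s :
  H (extend pt (shift_alpha s)) -> H (extend pt (conj_shift c s)).
Proof.
move=> Hs; have [g Hg gE] := H_rich c.
have [h Hh [gh hg]] := H_sub.2.2.2 g Hg.
rewrite -(conj_extend_shift s gh hg gE).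
exact: subgroup_comp H_sub Hh (subgroup_comp H_sub Hs Hg).
Qed.

Lemma flip_in (s : nat -> nat) (e : nat -> bool) :
  involutive s -> (forall i, e (s i) = e i) -> (forall i, e i -> s i != i) ->
  H (extend pt (shift_alpha s)) -> H (extend pt (flip e)).
Proof.
move=> sK es e_move Hs; have HM := subgroup_comp H_sub.
have Hc c := conj_shift_in c Hs.
rewrite (flip_conj_shifts sK es e_move) -!(extend_comp pt_inj).
by do 3 apply: (HM _ _ (Hc _)).
Qed.

Lemma even_flip_in Y :
  H (extend pt (shift_alpha pairing0)) -> H (extend pt (shift_alpha pairing1)) ->
  H (extend pt (even_flip Y)).
Proof.
move=> H0 H1; rewrite even_flip_as_comp -(extend_comp pt_inj).
apply: (subgroup_comp H_sub).
  apply: (flip_in pairing1_inv) H1 => [[|j]|[|j]] //=; first by rewrite half_pairing0.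
  by rewrite eqSS pairing0_neq.
by apply: (flip_in pairing0_inv) H0 => j; rewrite ?half_pairing0 ?pairing0_neq.
Qed.

End Generation.
End Swaps.

Unset Implicit Arguments.

Theorem lemma7p1 (Omega : Type)
  (Hcount : exists e : nat -> Omega, bijective e)
  (G : set (Omega -> Omega)) (HG : is_subgroup G)
  (alpha beta : nat -> Omega)
  (Halpha : injective alpha) (Hbeta : injective beta)
  (Hab : forall i j, alpha i <> beta j)
  (Hrich : forall gamma : nat -> Omega,
      (forall i, gamma i = alpha i \/ gamma i = beta i) ->
      exists2 g, G g & forall i, g (alpha i) = gamma i) :
  forall A0 : set (set Omega), is_A0 A0 -> preceq (part_stab A0) G.
Proof.
move=> A0 A0P; have [e e_bij] := Hcount.
have Omega_cnt A := countable_bij_nat A e_bij.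
have pt_inj := pt_inj Halpha Hbeta Hab.
pose shift s := extend (pt alpha beta) (shift_alpha s).
have shift_bij s : involutive s -> bijective (shift s).
  by move=> sK; apply/(extend_bij pt_inj)/inv_bij/shift_alpha_inv.
have [enc1 [[dec1 enc1K dec1K] sing pair]] := is_A0_enum A0P (Omega_cnt _).
have [enc2 [[dec2 enc2K dec2K] enc2E]] := complement_enum
  (even_pt_inj Halpha Hbeta Hab) (Omega_cnt _) (infinite_not_even_pt Halpha Hab).
pose u := enc2 \o dec1; pose v := enc1 \o dec2.
exists [set u; v; shift pairing0; shift pairing1]; split; first exact: finite_set4.
split.
  move=> g [[[->|->]|->]|->].
  - by exists v; apply: can_comp.
  - by exists u; apply: can_comp.
  - exact/shift_bij/pairing0_inv.
  - exact/shift_bij/pairing1_inv.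
move=> f f_stab H H_sub GU_H.
have [Y fY] := part_stab_flip_sum (can_inj enc1K) sing pair f_stab.
have H_rich c : exists2 g, H g & forall i, g (alpha i) = pt alpha beta (c i, i).
  have [|g Gg gE] := Hrich (fun i => pt alpha beta (c i, i)) => [i|].
    by case: (c i); [right|left].
  by exists g => //; apply: GU_H; left.
have [Hu Hv H0 H1] : [/\ H u, H v, H (shift pairing0) & H (shift pairing1)].
  by split; apply: GU_H; right; [do 3 left|left; left; right|left; right|right].
have H_flip := even_flip_in Halpha Hbeta Hab H_sub H_rich Y H0 H1.
suff -> : f = v \o extend (pt alpha beta) (even_flip Y) \o u.
  exact: subgroup_comp H_sub Hu (subgroup_comp H_sub H_flip Hv).
have flipE := extend_even_flip_enc Halpha Hbeta Hab Y (can_inj enc2K) enc2E.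
apply: funext => z; rewrite /u /v /=.
have := congr1 (@^~ (dec1 z)) flipE; have := congr1 (@^~ (dec1 z)) fY.
by rewrite /= dec1K => -> ->; rewrite enc2K.
Qed.
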